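(* Let $K\ge 2$, $a\ge 1$, $b\ge 1$ and $L\in[2:K]$ be integers. For the $(K,a,b,L)$ multiaccess coded caching problem for location-based content with cache size $M\ge 0$, the optimal worst-case load is $$R^\star=\begin{cases} K-\dfrac{K}{a+b}M, & 0\le M\le a+b,\\ 0, & M\ge a+b.\end{cases}$$
   Context: For integers $x\le y$, $[x:y]=\{x,x+1,\dots,y\}$ and $[n]=[1:n]$. For integers $c$ and $m\ge1$, $\langle c\rangle_m$ denotes the unique element of $\{1,\dots,m\}$ congruent to $c$ modulo $m$. For $k\in[K]$ define $\mathcal D_{k,1}=[(k-1)(a+b)+1:ka+(k-1)b]$, $\mathcal D_{k,2}=[ka+(k-1)b+1:k(a+b)]$, $\mathcal D_{k,3}=\mathcal D_{\langle k+1\rangle_K,1}$, and $\mathcal D_k=\mathcal D_{k,1}\cup\mathcal D_{k,2}\cup\mathcal D_{k,3}$. The $(K,a,b,L)$ multiaccess coded caching problem for location-based content: a server has $N=K(a+b)$ files $W_1,\dots,W_N$, each of $B$ independent uniformly distributed bits. There are $K$ cache nodes each storing $MB$ bits, with contents $Z_k=\phi_k(W_1,\dots,W_N)$ fixed without knowledge of demands, and $K$ users; user $k$ has free access to the cache nodes $k,\langle k+1\rangle_K,\dots,\langle k+L-1\rangle_K$. For each demand vector $\mathbf d\in\mathcal D_1\times\cdots\times\mathcal D_K$ the server broadcasts $X=\psi(\mathbf d,W_1,\dots,W_N)\in\{0,1\}^{RB}$, and each user $k$ must recover $W_{d_k}$ exactly from $(\mathbf d, Z_k,Z_{\langle k+1\rangle_K},\dots,Z_{\langle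 k+L-1\rangle_K},X)$. $R$ is the worst-case load; $R^\star$ is the infimum of achievable loads over all schemes (arbitrary, possibly coded, placement) and all $B$. *)

From mathcomp Require Import all_boot all_order all_algebra.
From mathcomp Require Import boolp classical_sets reals.
Set Implicit Arguments. Unset Strict Implicit. Unset Printing Implicit Defensive.
Import Order.TTheory GRing.Theory Num.Theory.

(* <c>_m for c >= 1: the element of {1..m} congruent to c mod m *)
Definition cmod (m c : nat) : nat := ((c + m).-1 %% m).+1.

(* Demand sets, 1-based user index k and 1-based file index x, as in the paper *)
Definition D1 (K a b k x : nat) : bool :=
  ((k - 1) * (a + b) + 1 <= x) && (x <= k * a + (k - 1) * b).
Definition D2 (K a b k x : nat) : bool :=
  (k * a + (k - 1) * b + 1 <= x) && (x <= k * (a + b)).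
Definition D3 (K a b k x : nat) : bool := D1 K a b (cmod K (k + 1)) x.
Definition Dk (K a b k x : nat) : bool := [|| D1 K a b k x, D2 K a b k x | D3 K a b k x].

(* Files W_1..W_N are represented 0-based: file index i : 'I_N stands for W_{i+1};
   user / cache node i : 'I_K stands for user / cache node i+1. *)
Definition valid_demand (K a b : nat) (d : 'I_K -> 'I_(K * (a + b))) : Prop :=
  forall k : 'I_K, Dk K a b k.+1 (d k).+1.

Lemma ord_pos (K : nat) (k : 'I_K) : 0 < K.
Proof. by apply: leq_ltn_trans (ltn_ord k). Qed.

(* the (j+1)-th cache node accessed by user k (0-based): node (k + j) mod K,
   i.e. in 1-based terms user k+1 accesses <k+1>, <k+2>, ..., <k+L>. *)
Definition acc_node (K : nat) (k : 'I_K) (j : nat) : 'I_K :=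
  Ordinal (ltn_pmod (k + j) (ord_pos k)).

Definition achievable {R : realType} (K a b L : nat) (M rho : R) : Prop :=
  exists (B m r : nat),
    [/\ (0 < B)%N, (m%:R <= M * B%:R)%R & (r%:R <= rho * B%:R)%R] /\
    exists (phi : 'I_K -> ('I_(K * (a + b)) -> B.-tuple bool) -> m.-tuple bool)
           (psi : ('I_K -> 'I_(K * (a + b))) -> ('I_(K * (a + b)) -> B.-tuple bool)
                  -> r.-tuple bool)
           (dec : 'I_K -> ('I_K -> 'I_(K * (a + b))) -> ('I_L -> m.-tuple bool)
                  -> r.-tuple bool -> B.-tuple bool),
      forall d : 'I_K -> 'I_(K * (a + b)), @valid_demand K a b d ->
      forall (W : 'I_(K * (a + b)) -> B.-tuple bool) (k : 'I_K),
        dec k d (fun j : 'I_L => phi (acc_node k j) W) (psi d W) = W (d k).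

Definition Rstar {R : realType} (K a b L : nat) (M : R) : R :=
  inf [set rho : R | achievable K a b L M rho].

From mathcomp Require Import all_boot all_order all_algebra.
From mathcomp Require Import boolp classical_sets reals.
From mathcomp Require Import lra zify.
Import Order.TTheory GRing.Theory Num.Theory.
Set Implicit Arguments. Unset Strict Implicit.

(* Files are grouped: group g (0-based) consists of the a+b consecutive files
   file g j, j < a+b.  User k may demand only files of groups k and k+1 mod K,
   and with L >= 2 it accesses the cache nodes k and k+1 mod K.

   Converse (cut-set bound).  For each j < a+b the "column" demand
   d_k = file k j is valid.  The K caches together with the a+b broadcasts
   sent for these column demands determine every file, so counting bits gives
   K (a+b) B <= K m + (a+b) r, i.e. K(a+b) <= K M + (a+b) R for any scheme.

   Achievability (file splitting).  Split every file into a cached prefix of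
   s bits and an uncached suffix of B - s bits.  Cache node g stores the
   prefixes of the a+b files of group g, and the server broadcasts the
   suffixes of the K demanded files; any user then knows both halves of its
   file.  Choosing s/B close to min(M/(a+b), 1) gets within any eps > 0 of
   the target load.  Decoders are obtained abstractly: any function that is
   determined by the observations can be decoded from them. *)

Lemma decoder_of_determined (T O X : Type) (obs : T -> O) (f : T -> X) (x0 : X) :
  (forall t t', obs t' = obs t -> f t' = f t) ->
  exists dec : O -> X, forall t, dec (obs t) = f t.
Proof.
move=> det.
exists (fun o => if pselect (exists t, obs t = o) is left e
                 then f (proj1_sig (cid e)) else x0) => t.
case: pselect => [e | no_t]; last by case: no_t; exists t.
by case: (cid e) => t' /= /det.
Qed.

Lemma inj_of_card (T U : finType) : #|T| <= #|U| -> {f : T -> U | injective f}.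
Proof.
move=> le_TU; exists (fun x => enum_val (widen_ord le_TU (enum_rank x))).
by move=> x y /enum_val_inj /(congr1 val) /= /val_inj /enum_rank_inj.
Qed.

Section FileGroups.
Variables K a b : nat.
Local Notation N := (K * (a + b)).

(* File j of group g, i.e. W_{g(a+b)+j+1} in the 1-based numbering. *)
Lemma file_lt (g : 'I_K) (j : 'I_(a + b)) : g * (a + b) + j < N.
Proof. by have := ltn_ord g; have := ltn_ord j; nia. Qed.

Definition file (g : 'I_K) (j : 'I_(a + b)) : 'I_N := Ordinal (file_lt g j).

Lemma fileP (i : 'I_N) :
  exists g j, i = file g j /\ val g = i %/ (a + b).
Proof.
have ab_pos : 0 < a + b by have := ltn_ord i; nia.
have g_lt : i %/ (a + b) < K by rewrite ltn_divLR.
have j_lt : i %% (a + b) < a + b by rewrite ltn_mod.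
exists (Ordinal g_lt), (Ordinal j_lt); split => //.
by apply: val_inj; rewrite /= -divn_eq.
Qed.

Lemma column_demand_valid (j : 'I_(a + b)) : valid_demand (fun k => file k j).
Proof.
move=> k; rewrite /Dk /D1 /D2 /=.
have := ltn_ord j; have := ltn_ord k => ltkK ltj.
by case: (ltnP j a) => hj; apply/or3P; [apply: Or31 | apply: Or32];
   apply/andP; split; nia.
Qed.

Lemma divn_eq_of_bounds (x k c : nat) : k * c <= x < k.+1 * c -> x %/ c = k.
Proof.
case/andP => lo hi; have c_pos : 0 < c by case: c lo hi => // _; rewrite muln0.
by apply/eqP; rewrite eqn_leq -ltnS ltn_divLR // hi leq_divRL.
Qed.

Lemma demand_group (k x : nat) : k < K -> Dk K a b k.+1 x.+1 ->
  x %/ (a + b) = k \/ x %/ (a + b) = (k + 1) %% K.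
Proof.
move=> ltkK; rewrite /Dk /D3 /D1 /D2 /cmod.
have -> : (k.+1 + 1 + K).-1 = (k + 1) + K by lia.
rewrite modnDr.
by case/or3P => /andP [lo hi]; [left | left | right];
   apply: divn_eq_of_bounds; apply/andP; split; nia.
Qed.

Lemma demand_accessible (L : nat) (d : 'I_K -> 'I_N) (k : 'I_K) :
  2 <= L -> valid_demand d ->
  exists (l : 'I_L) (j : 'I_(a + b)), d k = file (acc_node k l) j.
Proof.
move=> L2 valid_d.
have [g [j [dk_eq g_div]]] := fileP (d k).
suff [l node_g] : exists l : 'I_L, acc_node k l = g.
  by exists l, j; rewrite dk_eq node_g.
case: (demand_group (ltn_ord k) (valid_d k)); rewrite -g_div => g_eq.
  by exists (Ordinal (ltnW L2)); apply: val_inj; rewrite /= addn0 modn_small // g_eq.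
by exists (Ordinal L2); apply: val_inj; rewrite /= g_eq.
Qed.

End FileGroups.

Section Converse.
Variables K a b L B m r : nat.
Local Notation N := (K * (a + b)).
Variables (phi : 'I_K -> ('I_N -> B.-tuple bool) -> m.-tuple bool)
          (psi : ('I_K -> 'I_N) -> ('I_N -> B.-tuple bool) -> r.-tuple bool)
          (dec : 'I_K -> ('I_K -> 'I_N) -> ('I_L -> m.-tuple bool) ->
                 r.-tuple bool -> B.-tuple bool).
Hypothesis decodes : forall d, valid_demand d -> forall W (k : 'I_K),
  dec k d (fun l => phi (acc_node k l) W) (psi d W) = W (d k).

Lemma caches_and_columns_determine (W W' : 'I_N -> B.-tuple bool) :
  (forall g, phi g W = phi g W') ->
  (forall j, psi (fun k => file k j) W = psi (fun k => file k j) W') ->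
  W =1 W'.
Proof.
move=> same_caches same_columns i.
have [g [j [-> _]]] := fileP i.
have valid_j : valid_demand (fun k : 'I_K => file k j) := column_demand_valid j.
rewrite -(decodes valid_j W g) -(decodes valid_j W' g) same_columns.
by congr dec; apply: funext => l.
Qed.

Lemma cut_set_bound : N * B <= K * m + (a + b) * r.
Proof.
pose F (W : {ffun 'I_N -> B.-tuple bool}) :
    {ffun 'I_K -> m.-tuple bool} * {ffun 'I_(a + b) -> r.-tuple bool} :=
  ([ffun g => phi g W], [ffun j => psi (fun k => file k j) W]).
have F_inj : injective F.
  move=> W W' [/ffunP same_caches /ffunP same_columns]; apply/ffunP.
  apply: caches_and_columns_determine => [g | j].
    by have := same_caches g; rewrite !ffunE.
  by have := same_columns j; rewrite !ffunE.
have := leq_card F F_inj.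
rewrite card_prod !card_ffun !card_tuple !card_bool !card_ord -!expnM -expnD.
by rewrite leq_exp2l //; nia.
Qed.

End Converse.

Lemma splitting_scheme (K a b L B s : nat) : 2 <= L -> s <= B ->
  let N := K * (a + b) in
  exists (phi : 'I_K -> ('I_N -> B.-tuple bool) -> (s * (a + b)).-tuple bool)
         (psi : ('I_K -> 'I_N) -> ('I_N -> B.-tuple bool) -> ((B - s) * K).-tuple bool)
         (dec : 'I_K -> ('I_K -> 'I_N) -> ('I_L -> (s * (a + b)).-tuple bool) ->
                ((B - s) * K).-tuple bool -> B.-tuple bool),
    forall d, valid_demand d -> forall W (k : 'I_K),
      dec k d (fun l => phi (acc_node k l) W) (psi d W) = W (d k).
Proof.
move=> L2 le_sB N.
have [halves halves_inj] :
    {f : B.-tuple bool -> s.-tuple bool * (B - s).-tuple bool | injective f}.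
  by apply: inj_of_card; rewrite card_prod !card_tuple card_bool -expnD subnKC.
have [pack_cache pack_cache_inj] :
    {f : {ffun 'I_(a + b) -> s.-tuple bool} -> (s * (a + b)).-tuple bool | injective f}.
  by apply: inj_of_card; rewrite card_ffun !card_tuple card_bool card_ord -expnM.
have [pack_bcast pack_bcast_inj] :
    {f : {ffun 'I_K -> (B - s).-tuple bool} -> ((B - s) * K).-tuple bool | injective f}.
  by apply: inj_of_card; rewrite card_ffun !card_tuple card_bool card_ord -expnM.
pose phi g (W : 'I_N -> B.-tuple bool) :=
  pack_cache [ffun j => (halves (W (file g j))).1].
pose psi (d : 'I_K -> 'I_N) (W : 'I_N -> B.-tuple bool) :=
  pack_bcast [ffun k => (halves (W (d k))).2].
exists phi, psi.
(* One decoder for all users and valid demands at once: the observation of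
   user k consists of k, the demand, its L caches and the broadcast. *)
pose obs (t : 'I_K * {d : 'I_K -> 'I_N | valid_demand d} * ('I_N -> B.-tuple bool)) :=
  let: (k, d, W) := t in (k, sval d, fun l : 'I_L => phi (acc_node k l) W, psi (sval d) W).
have [dec decP] : exists dec, forall t, dec (obs t) = let: (k, d, W) := t in W (sval d k).
  apply: (decoder_of_determined [tuple of nseq B false]).
  move=> [[k [d vd]] W] [[k' [d' _]] W'] /= [-> -> same_caches same_bcast].
  have [l [j dk_file]] := demand_accessible k L2 vd.
  have same_prefix : (halves (W' (d k))).1 = (halves (W (d k))).1.
    have /pack_cache_inj/ffunP/(_ j) := congr1 (fun c => c l) same_caches.
    by rewrite dk_file !ffunE.
  have same_suffix : (halves (W' (d k))).2 = (halves (W (d k))).2.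
    by have /pack_bcast_inj/ffunP/(_ k) := same_bcast; rewrite !ffunE.
  apply: halves_inj; move: same_prefix same_suffix.
  by case: (halves (W' (d k))) => ? ?; case: (halves (W (d k))) => ? ? /= -> ->.
exists (fun k d c y => dec (k, d, c, y)) => d vd W k.
exact: (decP (k, exist _ d vd, W)).
Qed.

Local Open Scope ring_scope.

Definition target_load (R : realFieldType) (K n : nat) (M : R) : R :=
  if M <= n%:R then K%:R - K%:R / n%:R * M else 0.

Lemma target_load_le (R : realFieldType) (K n : nat) (M rho : R) :
  (0 < n)%N -> 0 <= rho -> K%:R * n%:R <= K%:R * M + n%:R * rho ->
  target_load K n M <= rho.
Proof.
move=> n_pos rho_ge0 cut; rewrite /target_load; case: ifP => // _.
have n_gt0 : 0 < n%:R :> R by rewrite ltr0n.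
rewrite -(ler_pM2r n_gt0) mulrBl mulrAC divfK ?gt_eqF //.
by lra.
Qed.

Lemma target_load_fraction (R : realFieldType) (K n : nat) (M : R) :
  (0 < n)%N -> 0 <= M ->
  exists t : R, [/\ 0 <= t <= 1, t * n%:R <= M & target_load K n M = K%:R * (1 - t)].
Proof.
move=> n_pos M_ge0; have n_gt0 : 0 < n%:R :> R by rewrite ltr0n.
rewrite /target_load; case: ifP => [le_Mn | lt_nM].
  exists (M / n%:R); split.
  - by rewrite divr_ge0 ?(ltW n_gt0) //= ler_pdivrMr // mul1r.
  - by rewrite divfK ?gt_eqF.
  - by rewrite mulrBr mulr1 mulrA mulrAC.
exists 1; split; first by rewrite lexx ler01.
  by rewrite mul1r ltW // ltNge lt_nM.
by rewrite subrr mulr0.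
Qed.

Lemma achievable_ge_target (R : realType) (K a b L : nat) (M rho : R) :
  (1 <= a)%N -> achievable K a b L M rho -> target_load K (a + b) M <= rho.
Proof.
move=> a_pos [B [m [r [[B_pos le_mMB le_r_rhoB] [phi [psi [dec decodes]]]]]]].
have B_gt0 : 0 < B%:R :> R by rewrite ltr0n.
have rho_ge0 : 0 <= rho.
  by rewrite -(pmulr_lge0 _ B_gt0); apply: le_trans le_r_rhoB.
apply: target_load_le => //; first by lia.
have := @cut_set_bound K a b L B m r phi psi dec decodes.
rewrite -(ler_nat R) natrD !natrM => cut.
have K_ge0 : 0 <= K%:R :> R by [].
have ab_ge0 : 0 <= (a + b)%:R :> R by [].
rewrite -(ler_pM2r B_gt0); nra.
Qed.

Lemma target_plus_eps_achievable (R : realType) (K a b L : nat) (M eps : R) :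
  (1 <= a)%N -> (2 <= L)%N -> 0 <= M -> 0 < eps ->
  achievable K a b L M (target_load K (a + b) M + eps).
Proof.
move=> a_pos L2 M_ge0 eps_gt0.
have [t [/andP [t_ge0 t_le1] tn_le_M ->]] := target_load_fraction K (n := a + b)
  (ltn_addr b a_pos) M_ge0.
pose B := (Num.truncn (K%:R / eps)).+1.
have K_lt_epsB : K%:R < eps * B%:R.
  by have := truncnS_gt (K%:R / eps); rewrite ltr_pdivrMr // mulrC.
pose s := Num.truncn (t * B%:R).
have s_le : s%:R <= t * B%:R by rewrite truncn_le mulr_ge0.
have s_gt : t * B%:R < s%:R + 1 by rewrite natr1; apply: truncnS_gt.
have le_sB : (s <= B)%N.
  by rewrite -(ler_nat R); apply: (le_trans s_le); rewrite ler_piMl.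
have [phi [psi [dec decodes]]] := splitting_scheme K a b L2 le_sB.
exists B, (s * (a + b))%N, ((B - s) * K)%N; split; last by exists phi, psi, dec.
split => //; rewrite !natrM ?natrB //.
  apply: le_trans (ler_wpM2r (ler0n _ _) s_le) _.
  by rewrite mulrAC ler_wpM2r.
(* (B - s) K < ((1 - t) B + 1) K <= (1 - t) K B + eps B. *)
have K_ge0 : 0 <= K%:R :> R by [].
nra.
Qed.

Theorem theorem3 (R : realType) (K a b L : nat) (M : R) :
  (2 <= K)%N -> (1 <= a)%N -> (1 <= b)%N -> (2 <= L)%N -> (L <= K)%N ->
  0 <= M ->
  Rstar K a b L M =
    (if M <= (a + b)%:R then K%:R - K%:R / (a + b)%:R * M else 0).
Proof.
move=> _ a_pos _ L2 _ M_ge0.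
rewrite -/(target_load K (a + b) M) /Rstar.
set S := (X in inf X).
have target_lb : classical_sets.lbound S (target_load K (a + b) M).
  by move=> rho; apply: achievable_ge_target.
apply/eqP; rewrite eq_le; apply/andP; split; last first.
  apply: lb_le_inf target_lb.
  by exists (target_load K (a + b) M + 1); apply: target_plus_eps_achievable.
apply/ler_addgt0Pr => eps eps_gt0.
apply: (ge_inf (ex_intro _ _ target_lb)).
exact: target_plus_eps_achievable.
Qed.
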